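(* For every $\ell\ge1$ and $n\ge0$, the coproduct of $\gamma_{\ell,n}$ in $H^*(B\mathcal{S}_\bullet;\mathbb{F}_2)$ is $$\Delta\gamma_{\ell,n}=\sum_{i+j=n}\gamma_{\ell,i}\otimes\gamma_{\ell,j}.$$
   Context: $B\mathcal{S}_\bullet=\coprod_{n\ge0}B\mathcal{S}_n$, coefficients $\mathbb{F}_2$. $\Delta$ on $H^*(B\mathcal{S}_\bullet)$ is the linear dual of the product $*$ on $H_*(B\mathcal{S}_\bullet)$ induced by the block inclusions $\mathcal{S}_n\times\mathcal{S}_m\subset\mathcal{S}_{n+m}$. Let $\iota\in H_0(B\mathcal{S}_1)$ be nonzero, $q_i$ the Kudo–Araki (Dyer–Lashof) operations $H_d(B\mathcal{S}_n)\to H_{2d+i}(B\mathcal{S}_{2n})$, $q_I=q_{i_1}(\cdots q_{i_k}(\iota))$. By Nakaoka, $H_*(B\mathcal{S}_\bullet)$ is polynomial under $*$ on $\iota$ and the $q_I$ with $0<i_1\le\dots\le i_k$; for a monomial $\alpha$, $\alpha^\vee$ is the dual class in the monomial basis. With $q_{\ell\cdot1}=q_{(1,\dots,1)}$ ($\ell$ ones), $\gamma_{\ell,n}=((q_{\ell\cdot1})^{*n})^\vee\in H^{n(2^\ell-1)}(B\mathcal{S}_{n2^\ell})$; $\gamma_{\ell,0}=1_0$, the unit in $H^0(B\mathcal{S}_0)$. *)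

From HB Require Import structures.
From mathcomp Require Import all_boot all_order all_algebra.
From mathcomp Require Import finmap.
From mathcomp Require Import monalg.
Set Implicit Arguments. Unset Strict Implicit. Unset Printing Implicit Defensive.
Import GRing.Theory.
Local Open Scope ring_scope.

(* Nakaoka generators of H_*(BS_bullet; F_2) as a polynomial algebra:
   q_I for I = (i_1,...,i_k) with 0 < i_1 <= ... <= i_k, where the empty
   sequence I = [::] stands for q_{()} = iota.                                 *)
Definition admissible (s : seq nat) : bool := all (leq 1) s && sorted leq s.
Definition Gen := {s : seq nat | admissible s}.

(* H_*(BS_bullet; F_2) with the product * : the polynomial (free commutative)
   F_2-algebra on the Nakaoka generators.  Basis = monomials {cmonom Gen}.   *)
Definition Mon := {cmonom Gen}.
Definition HS := {malg 'F_2[Mon]}.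

Definition star (x y : HS) : HS := x * y.

(* Cohomology classes are viewed as (linear) functionals on homology;
   alpha^vee = dual of the monomial alpha in the monomial basis.             *)
Definition dualmon (a : Mon) : HS -> 'F_2 := fun x => x@_a.

(* Delta = linear dual of *, seen as a bilinear form on H_* (x) H_*.        *)
Definition coprod (phi : HS -> 'F_2) : HS -> HS -> 'F_2 :=
  fun x y => phi (star x y).

Definition tens (phi psi : HS -> 'F_2) : HS -> HS -> 'F_2 :=
  fun x y => phi x * psi y.

Lemma admissible_ones (l : nat) : admissible (nseq l 1%N).
Proof.
rewrite /admissible; apply/andP; split.
  by apply/allP=> x /nseqP [-> _].
by elim: l => [|[|l] IH] //=.
Qed.
Definition q_ones (l : nat) : Gen := exist _ (nseq l 1%N) (admissible_ones l).

Definition qmon (l n : nat) : Mon := expcmn (ucm (q_ones l)) n.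

Definition gamma (l n : nat) : HS -> 'F_2 := dualmon (qmon l n).

From mathcomp Require Import all_boot all_order all_algebra.
From mathcomp Require Import finmap monalg.
Import GRing.Theory.
Local Open Scope ring_scope.

(* Evaluating [gamma l n] on [x * y] reads off the coefficient of the monomial
   [q^n] in a product of polynomials, where [q = q_{l.1}].  A product of two
   monomials equals [q^n] exactly when the factors are [q^i] and [q^(n-i)] for
   a unique [i <= n]; hence that coefficient is [\sum_i x_(q^i) * y_(q^(n-i))],
   which is the value of [\sum_i gamma l i (x) gamma l (n-i)] on [x (x) y]. *)

Lemma mcoeff_sift {K : choiceType} {G : zmodType} (x : {malg G[K]}) k :
  \sum_(k' <- msupp x) x@_k' *+ (k' == k) = x@_k.
Proof.
have [kx | kNx] := boolP (k \in msupp x).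
  rewrite (bigD1_seq k) //= ?fset_uniq // eqxx mulr1n big1 ?addr0 // => k' /negbTE.
  by rewrite eq_sym => ->.
rewrite (mcoeff_outdom kNx) big1_seq // => k' /andP[_ k'x].
by case: eqP => // ek; move: kNx; rewrite -ek k'x.
Qed.

Section PowersOfAVariable.
Variables (I : choiceType) (g : I).

Local Notation pw := (expcmn (ucm g)).

Lemma expcmn_ucmE k i : pw k i = (k * (g == i))%N.
Proof.
case: k => [|k]; first by rewrite onecmE.
elim: k => [|k IHk]; first by rewrite /= ucmE mul1n.
by rewrite [pw _]/= mulcmE IHk ucmE mulSn.
Qed.

Lemma expcmn_ucm_inj : injective pw.
Proof.
move=> a b /(congr1 (fun m : {cmonom I} => m g)).
by rewrite !expcmn_ucmE eqxx !muln1.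
Qed.

Lemma mulcm_expcmn_ucm a b : mmul (pw a) (pw b) = pw (a + b).
Proof. by apply/eqP/cmP => i; rewrite cmM !expcmn_ucmE mulnDl. Qed.

Lemma cmonom_supp1 (m : {cmonom I}) :
  (forall j, j != g -> m j = 0%N) -> m = pw (m g).
Proof.
move=> m0; apply/eqP/cmP => j; rewrite expcmn_ucmE.
by case: (eqVneq g j) => [<-|/negbTE ne]; rewrite ?muln1 // muln0 m0 // eq_sym ne.
Qed.

Lemma mulcm_eq_expcmn_ucm m1 m2 n : mmul m1 m2 = pw n ->
  [/\ m1 = pw (m1 g), m2 = pw (m2 g) & (m1 g + m2 g)%N = n].
Proof.
move=> E; have Ej j : (m1 j + m2 j)%N = (n * (g == j))%N.
  by rewrite -cmM E expcmn_ucmE.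
have off j : j != g -> m1 j = 0%N /\ m2 j = 0%N.
  move=> ne; move/eqP: (Ej j).
  by rewrite [g == j]eq_sym (negbTE ne) muln0 addn_eq0 => /andP[/eqP -> /eqP ->].
split; first exact: cmonom_supp1 (fun j ne => (off j ne).1).
  exact: cmonom_supp1 (fun j ne => (off j ne).2).
by rewrite Ej eqxx muln1.
Qed.

Lemma mulcm_eq_expcmn_ucm_count m1 m2 n :
  nat_of_bool (mmul m1 m2 == pw n) =
  (\sum_(i < n.+1) ((m1 == pw i) && (m2 == pw (n - i))))%N.
Proof.
have [/mulcm_eq_expcmn_ucm [E1 E2 En] | neq] := eqVneq.
  have lt1 : (m1 g < n.+1)%N by rewrite ltnS -En leq_addr.
  have n_sub : (n - m1 g = m2 g)%N by rewrite -En addKn.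
  rewrite (bigD1 (Ordinal lt1)) //= n_sub -E1 -E2 !eqxx.
  rewrite big1 // => i /eqP ne; case: andP => // -[/eqP e _].
  by case: ne; apply: val_inj; apply: expcmn_ucm_inj; rewrite /= -E1.
rewrite big1 // => i _; case: andP => // -[/eqP e1 /eqP e2].
by case/eqP: neq; rewrite e1 e2 mulcm_expcmn_ucm subnKC // -ltnS.
Qed.

Lemma mcoeffM_expcmn_ucm (R : nzRingType) (x y : {malg R[{cmonom I}]}) n :
  (x * y)@_(pw n) = \sum_(i < n.+1) x@_(pw i) * y@_(pw (n - i)).
Proof.
have -> : \sum_(i < n.+1) x@_(pw i) * y@_(pw (n - i)) =
    \sum_(i < n.+1) \sum_(m1 <- msupp x) \sum_(m2 <- msupp y)
      (x@_m1 * y@_m2) *+ ((m1 == pw i) && (m2 == pw (n - i))).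
  apply: eq_bigr => i _; rewrite -(mcoeff_sift x) -(mcoeff_sift y) mulr_suml.
  apply: eq_bigr => m1 _; rewrite mulr_sumr; apply: eq_bigr => m2 _.
  by rewrite mulrnAl mulrnAr -mulrnA mulnC mulnb.
rewrite mcoeffMl [RHS]exchange_big; apply: eq_bigr => m1 _.
rewrite [RHS]exchange_big; apply: eq_bigr => m2 _.
by rewrite sumrMnr mulcm_eq_expcmn_ucm_count.
Qed.

End PowersOfAVariable.

Theorem mainTheorem7 (l n : nat) : (1 <= l)%N ->
  forall x y : HS,
    coprod (gamma l n) x y =
    \sum_(i < n.+1) tens (gamma l i) (gamma l (n - i)) x y.
Proof. by move=> _ x y; exact: mcoeffM_expcmn_ucm. Qed.
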